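(* Let $\Gamma$ be a weak generalised hexagon of order $(s,t)$ and let $\mathcal{S}$ be a set of mutually opposite lines of $\Gamma$. Then $|\mathcal{S}|\le st^2+1$.
   Context: A weak generalised hexagon is a point-line geometry with no ordinary $k$-gons for $2\le k<6$ in which any two elements lie in a common ordinary hexagon; order $(s,t)$ means every line has $s+1$ points and every point is on $t+1$ lines. Distance is measured in the incidence graph; two lines are opposite if they are at distance $6$. *)

From mathcomp Require Import all_boot.
Set Implicit Arguments. Unset Strict Implicit. Unset Printing Implicit Defensive.

Definition elt (P L : finType) := (P + L)%type.

Definition inc_adj (P L : finType) (I : P -> L -> bool) : rel (elt P L) :=
  fun x y => match x, y with
             | inl p, inr l => I p l
             | inr l, inl p => I p l
             | _, _ => false
             end.

Definition ordinary_gon (P L : finType) (I : P -> L -> bool) (k : nat)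
  (c : seq (elt P L)) : Prop :=
  [/\ size c = (2 * k)%N, uniq c & cycle (inc_adj I) c].

Definition weak_gen_hexagon (P L : finType) (I : P -> L -> bool) : Prop :=
  (forall k c, 2 <= k < 6 -> ~ ordinary_gon I k c) /\
  (forall x y : elt P L, exists c, ordinary_gon I 6 c /\ x \in c /\ y \in c).

Definition has_order (P L : finType) (I : P -> L -> bool) (s t : nat) : Prop :=
  (forall l : L, #|[set p | I p l]| = s.+1) /\
  (forall p : P, #|[set l | I p l]| = t.+1).

Fixpoint walk (P L : finType) (I : P -> L -> bool) (n : nat)
  (x y : elt P L) : bool :=
  match n with
  | 0 => x == y
  | n'.+1 => [exists z, inc_adj I x z && walk I n' z y]
  end.

Definition dist_eq (P L : finType) (I : P -> L -> bool) (x y : elt P L)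
  (d : nat) : Prop :=
  walk I d x y /\ (forall k, k < d -> ~~ walk I k x y).

Definition opposite_lines (P L : finType) (I : P -> L -> bool) (l m : L) : Prop :=
  dist_eq I (inr l) (inr m) 6.

From mathcomp Require Import all_boot zify.
Set Implicit Arguments. Unset Strict Implicit. Unset Printing Implicit Defensive.

(* Fix l in S.  For every other line m of S and every point q on m, the
   point q is at distance 5 from l, so an ordinary hexagon through l and q
   contains a non-backtracking path l, a, b, c, n, q; let n be the image of
   the flag (m, q).  This map is injective: two flags on the same line m
   would make a digon with n (n = m is excluded since d(l, m) = 6), and
   flags on different lines m, m' give a path m, q, n, q', m' of length 4.
   Hence (|S| - 1)(s + 1) is at most the number (s + 1) t s t of such
   paths. *)

Lemma leq_card_bigcup (I T : finType) (A : {set I}) (F : I -> {set T}) :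
  #|\bigcup_(i in A) F i| <= \sum_(i in A) #|F i|.
Proof.
apply: (big_ind2 (fun (X : {set T}) n => #|X| <= n)) => [|X m Y n leXm leYn|//].
  by rewrite cards0.
exact: leq_trans (leq_card_setU X Y) (leq_add leXm leYn).
Qed.

Lemma leq_card_rel (T U : finType) (A : {set T}) (B : {set U})
    (R : T -> U -> bool) :
  (forall x, x \in A -> exists2 y, y \in B & R x y) ->
  (forall x x' y, x \in A -> x' \in A -> y \in B -> R x y -> R x' y -> x = x') ->
  #|A| <= #|B|.
Proof.
move=> RA Rinj; pose f x := [pick y in B | R x y].
have fP x : x \in A -> exists2 y, f x = Some y & (y \in B) && R x y.
  move=> Ax; rewrite /f; case: pickP => [y yBR | noR]; first by exists y.
  by have [y By Rxy] := RA x Ax; move: (noR y); rewrite By Rxy.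
have f_inj : {in A &, injective f}.
  move=> x x' Ax Ax' fxx'; have [y fx /andP[By Rxy]] := fP x Ax.
  have [y' fx' /andP[_ Rxy']] := fP x' Ax'.
  by apply: Rinj Ax Ax' By Rxy _; move: fx'; rewrite -fxx' fx => -[->].
rewrite -(card_in_imset f_inj) -(card_imset B (@Some_inj _)).
apply: subset_leq_card; apply/subsetP=> _ /imsetP[x Ax ->].
by have [y -> /andP[By _]] := fP x Ax; apply: imset_f.
Qed.

Lemma cycle_arcs (T : eqType) (e : rel T) (x y : T) (s : seq T) :
  symmetric e -> cycle e (x :: s) -> uniq (x :: s) -> y \in s ->
  exists p1 p2, [/\ path e x (rcons p1 y), path e x (rcons p2 y),
    uniq (x :: p1), uniq (x :: p2) & (size p1 + size p2).+1 = size s].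
Proof.
move=> e_sym cyc_s uniq_s s_y; case/splitPr: s_y cyc_s uniq_s => p1 p2 + uniq_s.
rewrite [cycle _ _]/= rcons_cat rcons_cons cat_path /= => /and3P[e_p1 e_y e_p2].
exists p1, (rev p2); split.
- by rewrite rcons_path e_p1.
- move: e_p2; rewrite -(eq_path (e := fun z => e^~ z)) => [|a b]; last exact: e_sym.
  by rewrite -rev_path last_rcons belast_rcons rev_cons.
- by apply: (subseq_uniq (s1 := x :: p1) _ uniq_s); rewrite /= eqxx prefix_subseq.
- rewrite -[_ && _]/(uniq (x :: rev p2)) -rev_rcons rev_uniq rcons_uniq.
  apply: (subseq_uniq (s1 := x :: p2) _ uniq_s).
  by rewrite /= eqxx -cat_rcons suffix_subseq.
- by rewrite size_cat /= size_rev addnS.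
Qed.

Section IncidenceGraph.
Variables (P L : finType) (I : P -> L -> bool).
Local Notation adj := (inc_adj I).
Local Notation walk := (walk I).

Lemma inc_adjC : symmetric adj.
Proof. by case=> ? [] ?. Qed.

Lemma walkS n x z y : adj x z -> walk n z y -> walk n.+1 x y.
Proof. by move=> xz zy; apply/existsP; exists z; rewrite xz. Qed.

Lemma walkSr n x z y : walk n x z -> adj z y -> walk n.+1 x y.
Proof.
elim: n x => [x /eqP-> zy | n IHn x /existsP[u /andP[xu uz]] zy].
  exact: (walkS (n := 0) zy (eqxx y)).
exact: walkS xu (IHn u uz zy).
Qed.

Lemma path_walk x p : path adj x p -> walk (size p) x (last x p).
Proof.
elim: p x => [x _ | y p IHp x /andP[xy /IHp yp]]; first exact: eqxx.
exact: walkS xy yp.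
Qed.

Definition is_line (x : elt P L) : bool := if x is inr _ then true else false.

Lemma walk_odd n x y : walk n x y -> odd n = (is_line x != is_line y).
Proof.
elim: n x => [x /eqP-> | n IHn x /existsP[z /andP[xz /IHn odd_n]]].
  by rewrite eqxx.
by rewrite /= {}odd_n; case: x xz => ?; case: z => ? //= _; case: (is_line y).
Qed.

Definition nbpath4 (l n : L) := [exists a, exists b, exists c,
  [&& I a l, I a b, b != l, I c b, c != a, I c n & n != b]].

Lemma nbpath4_walk l n : nbpath4 l n -> walk 4 (inr l) (inr n).
Proof.
case/existsP=> a /existsP[b /existsP[c /and5P[al ab _ cb /and3P[_ cn _]]]].
by apply: (path_walk (p := [:: inl a; inr b; inl c; inr n])); rewrite /= al ab cb cn.
Qed.

Lemma ordinary_digon q q' m n : q != q' -> m != n ->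
  I q m -> I q' m -> I q' n -> I q n ->
  ordinary_gon I 2 [:: inl q; inr m; inl q'; inr n].
Proof.
move=> qq' mn qm q'm q'n qn; split=> //=; last by rewrite qm q'm q'n qn.
by rewrite !inE !negb_or qq' mn /=.
Qed.

Section Projection.
Variables (l : L) (q : P).
Hypothesis far_lq : forall k, k < 5 -> ~~ walk k (inr l) (inl q).

Lemma arc_nbpath4 p : path adj (inr l) (rcons p (inl q)) -> uniq (inr l :: p) ->
  size p <= 5 -> exists2 n, nbpath4 l n & I q n.
Proof.
move=> lq_p uniq_p size_p; have := path_walk lq_p.
rewrite size_rcons last_rcons => lq_walk.
have even_p : ~~ odd (size p) by have /= -> := walk_odd lq_walk.
have size_gt3 : 3 < size p.
  by rewrite ltnNge; apply: contraL lq_walk => le3; exact: far_lq (size p).+1 le3.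
case: p lq_p uniq_p size_p even_p size_gt3 {lq_walk}
  => [|e1 [|e2 [|e3 [|e4 [|e5 [|? ?]]]]]] //.
case: e1 => a; case: e2 => b; case: e3 => c; case: e4 => n; rewrite /= ?andbF //.
move=> /and5P[la ab cb cn qn] + _ _ _.
rewrite !inE /= !negb_or => /and4P[/andP[lb _] /andP[ac _] bn _].
exists n; last by rewrite andbT in qn.
apply/existsP; exists a; apply/existsP; exists b; apply/existsP; exists c.
rewrite la ab cb cn (eq_sym b) (eq_sym c) (eq_sym n).
by rewrite (lb : l != b) (ac : a != c) (bn : b != n).
Qed.

Lemma hexagon_nbpath4 c : ordinary_gon I 6 c -> inr l \in c -> inl q \in c ->
  exists2 n, nbpath4 l n & I q n.
Proof.
case=> size_c uniq_c cycle_c /rot_to[i s rot_c].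
rewrite -(mem_rot i) rot_c inE /= => s_q.
have size_s : size s = 11 by move: size_c; rewrite -(size_rot i) rot_c => -[].
have cycle_s : cycle adj (inr l :: s) by rewrite -rot_c rot_cycle.
have uniq_s : uniq (inr l :: s) by rewrite -rot_c rot_uniq.
have [p1 [p2 [path1 path2 uniq1 uniq2 size12]]] :=
  cycle_arcs (@inc_adjC) cycle_s uniq_s s_q.
have [le1|gt1] := leqP (size p1) 5; first exact: arc_nbpath4 path1 uniq1 le1.
apply: arc_nbpath4 path2 uniq2 _.
(* lia sees the sizes of p1 and p2 through different but convertible types. *)
by move: gt1 size12; rewrite size_s; move: (size p1) (size p2) => m n; lia.
Qed.

End Projection.

Section Order.
Variables s t : nat.
Hypothesis order_st : has_order I s t.

Lemma card_other_points p k : I p k -> #|[set p' | I p' k] :\ p| = s.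
Proof.
by move=> pk; have [+ _] := order_st; move/(_ k); rewrite (cardsD1 p) inE pk => -[].
Qed.

Lemma card_other_lines p k : I p k -> #|[set k' | I p k'] :\ k| = t.
Proof.
by move=> pk; have [_ +] := order_st; move/(_ p); rewrite (cardsD1 k) inE pk => -[].
Qed.

Lemma card_nbpath4 l : #|[set n | nbpath4 l n]| <= s.+1 * (t * (s * t)).
Proof.
pose pts k := [set p | I p k]; pose lns p := [set k | I p k].
have sub : [set n | nbpath4 l n] \subset \bigcup_(a in pts l) \bigcup_(b in lns a :\ l)
    \bigcup_(c in pts b :\ a) (lns c :\ b).
  apply/subsetP=> n; rewrite inE => /existsP[a /existsP[b /existsP[c]]].
  case/and5P=> al ab bl cb /and3P[ca cn nb].
  apply/bigcupP; exists a; first by rewrite inE.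
  apply/bigcupP; exists b; first by rewrite !inE bl.
  apply/bigcupP; exists c; first by rewrite !inE ca.
  by rewrite !inE nb.
apply: leq_trans (subset_leq_card sub) _; apply: leq_trans (leq_card_bigcup _ _) _.
have [+ _] := order_st; move/(_ l) <-; rewrite -sum_nat_const.
apply: leq_sum => a; rewrite inE => al; apply: leq_trans (leq_card_bigcup _ _) _.
rewrite -{1}(card_other_lines al) -sum_nat_const.
apply: leq_sum => b; rewrite !inE => /andP[_ ab].
apply: leq_trans (leq_card_bigcup _ _) _.
rewrite -{1}(card_other_points ab) -sum_nat_const.
by apply: leq_sum => c; rewrite !inE => /andP[_ cb]; rewrite (card_other_lines cb).
Qed.

Lemma card_flags (A : {set L}) :
  #|[set x : L * P | (x.1 \in A) && I x.2 x.1]| = #|A| * s.+1.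
Proof.
rewrite -sum1_card (eq_bigl (fun x : L * P => (x.1 \in A) && I x.2 x.1)); last first.
  by move=> x; rewrite inE.
rewrite -(pair_big_dep (mem A) (fun m q => I q m) (fun _ _ => 1)) -sum_nat_const.
by apply: eq_bigr => m _; rewrite sum1dep_card; have [-> _] := order_st.
Qed.

End Order.

End IncidenceGraph.

Section OppositeSet.
Variables (P L : finType) (I : P -> L -> bool) (S : {set L}) (l : L).
Hypothesis no_digon : forall c, ~ ordinary_gon I 2 c.
Hypothesis S_far : forall m m' k, m \in S -> m' \in S -> m != m' -> k < 6 ->
  ~~ walk I k (inr m) (inr m').
Hypothesis Sl : l \in S.

Lemma flag_far m q : m \in S -> m != l -> I q m ->
  forall k, k < 5 -> ~~ walk I k (inr l) (inl q).
Proof.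
move=> Sm ml qm k lt_k5.
have lm : l != m by rewrite eq_sym.
by apply: contra (S_far (k := k.+1) Sl Sm lm lt_k5) => /walkSr; apply.
Qed.

Lemma flag_nbpath4_inj m q m' q' n : m \in S -> m' \in S -> m != l ->
  nbpath4 I l n -> I q m -> I q' m' -> I q n -> I q' n -> (m, q) = (m', q').
Proof.
move=> Sm Sm' ml ln qm q'm' qn q'n.
have [mm'|mm'] := eqVneq m m'; last first.
  exfalso; apply: (negP (S_far (k := 4) Sm Sm' mm' isT)).
  apply: (path_walk (p := [:: inl q; inr n; inl q'; inr m'])).
  by rewrite /= qm qn q'n q'm'.
subst m'; have [<- //|qq'] := eqVneq q q'; exfalso.
have [nm|nm] := eqVneq n m.
  have lm : l != m by rewrite eq_sym.
  by apply: (negP (S_far (k := 4) Sl Sm lm isT)); rewrite -nm nbpath4_walk.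
have mn : m != n by rewrite eq_sym.
exact: no_digon (ordinary_digon qq' mn qm q'm' q'n qn).
Qed.

End OppositeSet.

Theorem mainTheorem4 (P L : finType) (I : P -> L -> bool) (s t : nat)
  (S : {set L}) :
  weak_gen_hexagon I -> has_order I s t ->
  (forall l m, l \in S -> m \in S -> l != m -> opposite_lines I l m) ->
  #|S| <= s * t ^ 2 + 1.
Proof.
move=> [no_gon hexagon] order_st opp_S.
have [->|[l Sl]] := set_0Vmem S; first by rewrite cards0.
have S_far m m' k : m \in S -> m' \in S -> m != m' -> k < 6 ->
    ~~ walk I k (inr m) (inr m').
  by move=> Sm Sm' mm'; apply: (opp_S m m' Sm Sm' mm').2.
have flags_le : #|[set x : L * P | (x.1 \in S :\ l) && I x.2 x.1]|
    <= #|[set n | nbpath4 I l n]|.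
  apply: (leq_card_rel (R := fun x n => I x.2 n)) => [[m q]|[m q] [m' q'] n].
    rewrite !inE /= => /andP[/andP[ml Sm] qm].
    have [c [hex_c [lc qc]]] := hexagon (inr l) (inl q).
    have [n ln qn] := hexagon_nbpath4 (flag_far S_far Sl Sm ml qm) hex_c lc qc.
    by exists n; rewrite ?inE.
  rewrite !inE /= => /andP[/andP[ml Sm] qm] /andP[/andP[_ Sm'] q'm'] ln qn q'n.
  by apply: (flag_nbpath4_inj _ S_far Sl Sm Sm' ml ln qm q'm' qn q'n) => c; apply: no_gon.
have := leq_trans flags_le (card_nbpath4 order_st l).
rewrite (card_flags order_st) mulnC leq_pmul2l // mulnCA mulnn => le_Sl.
by rewrite (cardsD1 l) Sl add1n addn1 ltnS.
Qed.
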